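(* For each constant $\beta\in[0,1)$, there exists an indivisible-goods instance in which no allocation satisfies EJR-$\beta$. This remains true even if the inequality $u_j(A)>t-\beta$ in the definition of EJR-$\beta$ is relaxed to $u_j(A)\ge t-\beta$.
   Context: Model: There is a set of agents $N=\{1,\dots,n\}$. The resource $R$ consists of a cake $C=[0,c]$ for a real $c\ge 0$ and a set of indivisible goods $G=\{g_1,\dots,g_m\}$ for an integer $m\ge 0$, with $\max(c,m)>0$. A piece of cake is a union of finitely many disjoint closed subintervals of $C$; its length $\ell(\cdot)$ is the sum of the lengths of its intervals. A bundle $R'=(C',G')$ consists of a piece of cake $C'\subseteq C$ and a set $G'\subseteq G$; its size is $s(R')=\ell(C')+|G'|$. Each agent $i$ approves a bundle $R_i=(C_i,G_i)$, and her utility for a bundle $R'$ is $u_i(R')=s(R_i\cap R')=\ell(C_i\cap C')+|G_i\cap G'|$. A parameter $\alpha\in(0,c+m]$ is given; an allocation is a bundle $A$ with $s(A)\le\alpha$. An instance consists of $R$, $N$, $(R_i)_{i\in N}$ and $\alpha$. It is an indivisible-goods instance if $c=0$ and a cake instance if $m=0$. For a real $t>0$, a group $N^*\subseteq N$ is $t$-cohesive if $|N^*|\ge t\cdot n/\alpha$ and $s(\bigcap_{i\in N^*}R_i)\ge t$. EJR-$\beta$ (for $\beta\ge 0$): an allocation $A$ satisfies EJR-$\beta$ if for every real $t>0$ and every $t$-cohesive group $N^*$, there is $j\in N^*$ with $u_j(A)>t-\beta$. *)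

From HB Require Import structures.
From mathcomp Require Import all_boot all_order all_algebra.
From mathcomp Require Import reals.
Set Implicit Arguments. Unset Strict Implicit. Unset Printing Implicit Defensive.
Import Order.TTheory GRing.Theory Num.Theory.
Local Open Scope ring_scope.

(* Indivisible-goods instance: cake C = [0,0] (c = 0), agents N = 'I_n,
   goods G = 'I_m, agent i approves the bundle (empty cake, appr i).
   Since the cake has length 0, sizes and utilities reduce to cardinalities
   of sets of goods. *)

Section Defs.
Variables (R : realType) (n m : nat).

(* validity of an indivisible-goods instance: N nonempty, m >= 1
   (so max(c,m) > 0 with c = 0), and alpha in (0, c + m] = (0, m]. *)
Definition valid_instance (alpha : R) : Prop :=
  (0 < n)%N /\ (0 < m)%N /\ 0 < alpha /\ alpha <= m%:R.

Definition common_approved (appr : 'I_n -> {set 'I_m}) (S : {set 'I_n})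
  : {set 'I_m} := [set g | [forall i in S, g \in appr i]].

Definition utility (appr : 'I_n -> {set 'I_m}) (i : 'I_n) (A : {set 'I_m})
  : nat := #|appr i :&: A|.

Definition is_allocation (alpha : R) (A : {set 'I_m}) : Prop :=
  #|A|%:R <= alpha.

Definition cohesive (appr : 'I_n -> {set 'I_m}) (alpha t : R)
  (S : {set 'I_n}) : Prop :=
  t * n%:R / alpha <= #|S|%:R /\ t <= #|common_approved appr S|%:R.

Definition EJR_beta (appr : 'I_n -> {set 'I_m}) (alpha beta : R)
  (A : {set 'I_m}) : Prop :=
  forall (t : R), 0 < t -> forall S : {set 'I_n}, cohesive appr alpha t S ->
    exists2 j, j \in S & t - beta < (utility appr j A)%:R.

Definition EJR_beta_weak (appr : 'I_n -> {set 'I_m}) (alpha beta : R)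
  (A : {set 'I_m}) : Prop :=
  forall (t : R), 0 < t -> forall S : {set 'I_n}, cohesive appr alpha t S ->
    exists2 j, j \in S & t - beta <= (utility appr j A)%:R.

End Defs.

(* Idea: a single agent approves both of two goods, and the budget is
   alpha = (3 + beta)/2, which lies in [3/2, 2).  Every allocation then holds
   at most one good, whereas the grand coalition is alpha-cohesive (it has
   alpha * n / alpha = n members and commonly approves 2 >= alpha goods), so
   EJR-beta would demand utility at least alpha - beta = (3 - beta)/2 > 1. *)

From HB Require Import structures.
From mathcomp Require Import all_boot all_order all_algebra.
From mathcomp Require Import reals.
From mathcomp Require Import lra.
Set Implicit Arguments. Unset Strict Implicit. Unset Printing Implicit Defensive.
Import Order.TTheory GRing.Theory Num.Theory.
Local Open Scope ring_scope.

Section EJRFailure.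
Variables (R : realType) (n m : nat).
Implicit Types (appr : 'I_n -> {set 'I_m}) (alpha beta : R) (A : {set 'I_m}).

Lemma EJR_beta_weaken appr alpha beta A :
  EJR_beta appr alpha beta A -> EJR_beta_weak appr alpha beta A.
Proof.
move=> ejr t t_gt0 S cohS; have [j jS ltj] := ejr t t_gt0 S cohS.
by exists j => //; apply: ltW.
Qed.

Lemma utility_le_card appr i A : (utility appr i A <= #|A|)%N.
Proof. by rewrite /utility subset_leq_card // subsetIr. Qed.

Lemma grand_coalition_cohesive appr alpha :
  0 < alpha -> alpha <= #|common_approved appr [set: 'I_n]|%:R ->
  cohesive appr alpha alpha [set: 'I_n].
Proof.
move=> alpha_gt0 common_ge; split=> //.
by rewrite cardsT card_ord mulrAC divff ?mul1r // lt0r_neq0.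
Qed.

Lemma no_EJR_beta_weak appr alpha beta :
  0 < alpha -> alpha <= #|common_approved appr [set: 'I_n]|%:R ->
  (forall A, is_allocation alpha A -> #|A|%:R < alpha - beta) ->
  forall A, is_allocation alpha A -> ~ EJR_beta_weak appr alpha beta A.
Proof.
move=> alpha_gt0 common_ge small A allocA ejr.
have [j _ ge_j] := ejr alpha alpha_gt0 _ (grand_coalition_cohesive alpha_gt0 common_ge).
have le_j : (utility appr j A)%:R <= #|A|%:R :> R by rewrite ler_nat utility_le_card.
by have := small A allocA; lra.
Qed.

End EJRFailure.

Lemma common_approved_all (n m : nat) (S : {set 'I_n}) :
  common_approved (fun _ => [set: 'I_m]) S = [set: 'I_m].
Proof. by apply/setP => g; rewrite !inE; apply/forallP => i; rewrite implybT. Qed.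

Lemma allocation_card_le1 (R : realType) (m : nat) (alpha : R) (A : {set 'I_m}) :
  alpha < 2 -> is_allocation alpha A -> #|A|%:R <= 1 :> R.
Proof.
rewrite /is_allocation => alpha_lt2 cardA.
have : (#|A| < 2)%N by rewrite -(ltr_nat R); apply: le_lt_trans alpha_lt2.
by rewrite ltnS -(ler_nat R).
Qed.

Theorem mainTheorem1 (R : realType) (beta : R) :
  0 <= beta -> beta < 1 ->
  exists (n m : nat) (appr : 'I_n -> {set 'I_m}) (alpha : R),
    valid_instance n m alpha /\
    (forall A : {set 'I_m}, is_allocation alpha A -> ~ EJR_beta appr alpha beta A) /\
    (forall A : {set 'I_m}, is_allocation alpha A -> ~ EJR_beta_weak appr alpha beta A).
Proof.
move=> beta_ge0 beta_lt1.
pose alpha : R := (3 + beta) / 2.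
have alpha_gt0 : 0 < alpha by rewrite /alpha; lra.
have common_ge : alpha <= #|common_approved (fun _ : 'I_1 => [set: 'I_2]) [set: 'I_1]|%:R.
  by rewrite common_approved_all cardsT card_ord /alpha; lra.
have small (A : {set 'I_2}) : is_allocation alpha A -> #|A|%:R < alpha - beta.
  have alpha_lt2 : alpha < 2 by rewrite /alpha; lra.
  by move=> /(allocation_card_le1 alpha_lt2); rewrite /alpha; lra.
have no_weak := no_EJR_beta_weak alpha_gt0 common_ge small.
exists 1%N, 2%N, (fun _ => [set: 'I_2]), alpha; split.
  by split=> //; split=> //; split=> //; rewrite /alpha; lra.
split=> // A allocA /EJR_beta_weaken; exact: no_weak.
Qed.
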